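(* Let $X=[a,b]^n$ with $a<b$, let $Z_d(z,x)\in\mathbb{R}^q$ be the vector of all monomials of degree at most $d$ in $(z,x)\in\mathbb{R}^{2n}$, let $P\in\mathbb{R}^{2q\times 2q}$ be symmetric, and let $k(x,y)=\int_X N(z,x)^TPN(z,y)\,dz$ with $N(z,x)=\begin{bmatrix} Z_d(z,x)I_{S_1}(z,x)\\ Z_d(z,x)I_{S_2}(z,x)\end{bmatrix}$. Then for each $\alpha\in\{0,1\}^n$ there is a polynomial $k_\alpha$ in the $2n$ variables $(x,y)$ such that $k(x,y)=k_\alpha(x,y)$ for all $x,y\in X$ satisfying $(-1)^{\alpha_i}(x_i-y_i)\ge 0$ for all $i=1,\dots,n$.
   Context: For $z,x\in\mathbb{R}^n$ write $z\ge x$ if $z_i\ge x_i$ for all $i$. Let $S_1:=\{(z,x)\in X\times X: z\ge x\}$, $S_2:=(X\times X)\setminus S_1$, and $I_S$ denotes the indicator function of a set $S$. *)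

From Stdlib Require Import Reals Lra Lia List Arith Classical ClassicalEpsilon.
Import ListNotations.
From Stdlib Require Import Bool.
Open Scope R_scope.
Open Scope bool_scope.

(* Points of R^n are functions nat -> R; only coordinates 0..n-1 matter. *)
Definition inX (n : nat) (a b : R) (z : nat -> R) : Prop :=
  forall i, (i < n)%nat -> a <= z i <= b.

Definition inXb (n : nat) (a b : R) (z : nat -> R) : bool :=
  forallb (fun i => if Rle_dec a (z i) then
                      if Rle_dec (z i) b then true else false
                    else false) (seq 0 n).

Definition geb (n : nat) (z x : nat -> R) : bool :=
  forallb (fun i => if Rle_dec (x i) (z i) then true else false) (seq 0 n).

Definition I_S1 (n : nat) (a b : R) (z x : nat -> R) : R :=
  if inXb n a b z && inXb n a b x && geb n z x then 1 else 0.
Definition I_S2 (n : nat) (a b : R) (z x : nat -> R) : R :=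
  if inXb n a b z && inXb n a b x && negb (geb n z x) then 1 else 0.

(* Exponent vectors (lists of length m) of total degree <= d, each exactly once. *)
Fixpoint mons (m d : nat) : list (list nat) :=
  match m with
  | O => [[]]
  | S m' => flat_map (fun k => map (cons k) (mons m' (d - k))) (seq 0 (S d))
  end.

Fixpoint monoAux (k : nat) (w : nat -> R) (e : list nat) : R :=
  match e with
  | [] => 1
  | c :: e' => w k ^ c * monoAux (S k) w e'
  end.
Definition mono (w : nat -> R) (e : list nat) : R := monoAux 0 w e.

Definition cat2 (n : nat) (u v : nat -> R) : nat -> R :=
  fun i => if (i <? n)%nat then u i else v (i - n)%nat.

Definition qdim (n d : nat) : nat := length (mons (2 * n) d).

Definition Zd (n d : nat) (z x : nat -> R) : list R :=
  map (mono (cat2 n z x)) (mons (2 * n) d).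

Definition Nvec (n d : nat) (a b : R) (z x : nat -> R) : list R :=
  map (fun v => v * I_S1 n a b z x) (Zd n d z x) ++
  map (fun v => v * I_S2 n a b z x) (Zd n d z x).

Fixpoint fsum (m : nat) (f : nat -> R) : R :=
  match m with O => 0 | S m' => fsum m' f + f m' end.

Definition quadN (n d : nat) (a b : R) (P : nat -> nat -> R) (z x y : nat -> R) : R :=
  let N1 := Nvec n d a b z x in
  let N2 := Nvec n d a b z y in
  fsum (2 * qdim n d) (fun i =>
    fsum (2 * qdim n d) (fun j => nth i N1 0 * P i j * nth j N2 0)).

(* Total version of the one-dimensional Riemann integral
   (value 0 when f is not Riemann integrable on [a,b]). *)
Definition Rint (f : R -> R) (a b : R) : R :=
  match excluded_middle_informative (exists _ : Riemann_integrable f a b, True) with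
  | left H => RiemannInt (proj1_sig (constructive_indefinite_description _ H))
  | right _ => 0
  end.

(* Integral over [a,b]^m of F (as an iterated Riemann integral over the
   coordinates z_0, ..., z_(m-1)). *)
Fixpoint intBox (m : nat) (a b : R) (F : (nat -> R) -> R) : R :=
  match m with
  | O => F (fun _ => 0)
  | S m' => Rint (fun t => intBox m' a b
                     (fun z => F (fun i => if (i =? m')%nat then t else z i))) a b
  end.

Definition kern (n d : nat) (a b : R) (P : nat -> nat -> R) (x y : nat -> R) : R :=
  intBox n a b (fun z => quadN n d a b P z x y).

(* Polynomial given as a list of (coefficient, exponent vector) terms *)
Definition polyEval (L : list (R * list nat)) (w : nat -> R) : R :=
  fold_right (fun p acc => fst p * mono w (snd p) + acc) 0 L.

From Coquelicot Require Import Coquelicot.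
From Stdlib Require Import Reals List Lra Lia Bool FunctionalExtensionality ClassicalEpsilon.
Import ListNotations.
Open Scope R_scope.

(* On the region where every [x_i - y_i] has the sign prescribed by [alpha], the
   indicators become boxes: [I_S1(z,x) = 1[x <= z <= b]], [I_S2(z,x) = 1[a <= z <= b] - 1[x <= z <= b]],
   and [1[x <= z] 1[y <= z] = 1[m <= z]] with [m_i = max(x_i, y_i)], which is [x_i] or [y_i]
   according to [alpha_i].  So [N(z,x)^T P N(z,y)] is a finite sum of terms [p(z,x,y) 1[c <= z <= b]]
   with [p] polynomial and each corner coordinate [c_i] equal to [a], an [x_j] or a [y_j].
   Such a term is integrated one coordinate at a time: [int_a^b 1[c_j <= t <= b] p(t) dt = F(b) - F(c_j)]
   for a polynomial antiderivative [F], and substituting [b] or [c_j] into a polynomial gives a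
   polynomial again. *)

(** * Polynomials in finitely many variables *)

Definition upd (w : nat -> R) (j : nat) (t : R) : nat -> R :=
  fun i => if (i =? j)%nat then t else w i.

Lemma upd_same w j t : upd w j t j = t.
Proof. unfold upd. now rewrite Nat.eqb_refl. Qed.

Lemma upd_other w j t i : i <> j -> upd w j t i = w i.
Proof. intros Hij. unfold upd. now destruct (Nat.eqb_spec i j). Qed.

Lemma monoAux_local k w w' e :
  (forall i, (k <= i < k + length e)%nat -> w i = w' i) ->
  monoAux k w e = monoAux k w' e.
Proof.
  revert k; induction e as [|c e IH]; intros k Hw; simpl; [reflexivity|].
  rewrite (Hw k) by (simpl; lia).
  rewrite (IH (S k)); [reflexivity|]. intros i Hi; apply Hw; simpl; lia.
Qed.

Fixpoint addexp (e f : list nat) : list nat :=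
  match e, f with
  | [], _ => f
  | _, [] => e
  | c :: e', c' :: f' => (c + c')%nat :: addexp e' f'
  end.

Lemma monoAux_addexp k w e f :
  monoAux k w (addexp e f) = monoAux k w e * monoAux k w f.
Proof.
  revert k f; induction e as [|c e IH]; intros k [|c' f]; simpl; try ring.
  rewrite IH, pow_add; ring.
Qed.

Lemma length_addexp e f : length (addexp e f) = Nat.max (length e) (length f).
Proof. revert f; induction e as [|c e IH]; intros [|c' f]; simpl; auto. Qed.

Definition unitexp (j : nat) : list nat := repeat 0%nat j ++ [1%nat].

Lemma monoAux_unitexp k w j : monoAux k w (unitexp j) = w (k + j)%nat.
Proof.
  revert k; induction j as [|j IH]; intros k; simpl.
  - rewrite Nat.add_0_r; ring.
  - unfold unitexp in IH. rewrite IH, Nat.add_succ_r. simpl. ring.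
Qed.

Lemma length_unitexp j : length (unitexp j) = S j.
Proof. unfold unitexp. rewrite length_app, repeat_length; simpl; lia. Qed.

Lemma monoAux_upd k w j t e :
  monoAux k (upd w (k + j) t) e = t ^ nth j e 0%nat * monoAux k (upd w (k + j) 1) e.
Proof.
  revert k j; induction e as [|c e IH]; intros k j; simpl.
  - destruct j; simpl; ring.
  - destruct j as [|j].
    + rewrite Nat.add_0_r, !upd_same, pow1.
      rewrite (monoAux_local (S k) (upd w k t) (upd w k 1)); [ring|].
      intros i Hi. rewrite !upd_other by lia. reflexivity.
    + rewrite !upd_other by lia. rewrite Nat.add_succ_r.
      change (S (k + j)) with (S k + j)%nat. rewrite IH. ring.
Qed.

Lemma mono_upd w j t e : mono (upd w j t) e = t ^ nth j e 0%nat * mono (upd w j 1) e.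
Proof. exact (monoAux_upd 0 w j t e). Qed.

Lemma polyEval_cons p L w : polyEval (p :: L) w = fst p * mono w (snd p) + polyEval L w.
Proof. reflexivity. Qed.

Lemma polyEval_app L1 L2 w : polyEval (L1 ++ L2) w = polyEval L1 w + polyEval L2 w.
Proof.
  induction L1 as [|p L1 IH]; cbn [app].
  - change (polyEval [] w) with 0; ring.
  - rewrite !polyEval_cons, IH; ring.
Qed.

Definition Lmul (L1 L2 : list (R * list nat)) : list (R * list nat) :=
  flat_map (fun p => map (fun p' => (fst p * fst p', addexp (snd p) (snd p'))) L2) L1.

Lemma polyEval_Lmul L1 L2 w : polyEval (Lmul L1 L2) w = polyEval L1 w * polyEval L2 w.
Proof.
  assert (Hterm : forall p L, polyEval (map (fun p' => (fst p * fst p', addexp (snd p) (snd p'))) L) w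
                              = fst p * mono w (snd p) * polyEval L w).
  { intros p; induction L as [|p' L IH]; [unfold polyEval; simpl; ring|].
    cbn [map]. rewrite !polyEval_cons, IH. cbn [fst snd]. unfold mono.
    rewrite monoAux_addexp; ring. }
  induction L1 as [|p L1 IH]; [unfold Lmul, polyEval; simpl; ring|].
  unfold Lmul in *; cbn [flat_map]. rewrite polyEval_app, IH, polyEval_cons, Hterm; ring.
Qed.

Definition poly_on (N : nat) (f : (nat -> R) -> R) : Prop :=
  exists L : list (R * list nat),
    Forall (fun t => (length (snd t) <= N)%nat) L /\ forall w, f w = polyEval L w.

Lemma poly_on_ext N f g : (forall w, f w = g w) -> poly_on N f -> poly_on N g.
Proof. intros Hfg [L [HL Hf]]. exists L. split; [exact HL|]. intros w. now rewrite <- Hfg. Qed.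

Lemma poly_on_const N c : poly_on N (fun _ => c).
Proof.
  exists [(c, [])]. split; [repeat constructor; simpl; lia|].
  intros w. rewrite polyEval_cons. unfold mono, polyEval; simpl; ring.
Qed.

Lemma poly_on_var N k : (k < N)%nat -> poly_on N (fun w => w k).
Proof.
  intros Hk. exists [(1, unitexp k)].
  split; [repeat constructor; simpl; rewrite length_unitexp; lia|].
  intros w. rewrite polyEval_cons; cbn [fst snd]. unfold mono. rewrite monoAux_unitexp.
  unfold polyEval; simpl; ring.
Qed.

Lemma poly_on_add N f g : poly_on N f -> poly_on N g -> poly_on N (fun w => f w + g w).
Proof.
  intros [L1 [HL1 Hf]] [L2 [HL2 Hg]]. exists (L1 ++ L2).
  split; [now apply Forall_app|]. intros w. now rewrite polyEval_app, Hf, Hg.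
Qed.

Lemma poly_on_mul N f g : poly_on N f -> poly_on N g -> poly_on N (fun w => f w * g w).
Proof.
  intros [L1 [HL1 Hf]] [L2 [HL2 Hg]]. exists (Lmul L1 L2). split.
  - apply Forall_flat_map. eapply Forall_impl; [|exact HL1]. intros p Hp.
    apply Forall_map. eapply Forall_impl; [|exact HL2]. intros p' Hp'.
    cbn [snd]. rewrite length_addexp. simpl in Hp, Hp'. lia.
  - intros w. now rewrite polyEval_Lmul, Hf, Hg.
Qed.

Lemma poly_on_sub N f g : poly_on N f -> poly_on N g -> poly_on N (fun w => f w - g w).
Proof.
  intros Hf Hg. apply (poly_on_ext N (fun w => f w + (-1) * g w)); [intros; ring|].
  apply poly_on_add; [exact Hf|]. apply poly_on_mul; [apply poly_on_const | exact Hg].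
Qed.

Lemma poly_on_pow N f c : poly_on N f -> poly_on N (fun w => f w ^ c).
Proof.
  intros Hf. induction c as [|c IH]; simpl; [apply poly_on_const|].
  now apply poly_on_mul.
Qed.

Lemma poly_on_weaken N N' f : (N <= N')%nat -> poly_on N f -> poly_on N' f.
Proof.
  intros HN [L [HL Hf]]. exists L. split; [|exact Hf].
  eapply Forall_impl; [|exact HL]. simpl; intros p Hp; lia.
Qed.

Lemma poly_on_mono N e : (length e <= N)%nat -> poly_on N (fun w => mono w e).
Proof.
  intros He. exists [(1, e)]. split; [repeat constructor; exact He|].
  intros w. rewrite polyEval_cons. unfold polyEval; simpl; ring.
Qed.

Lemma poly_on_local N f w w' :
  poly_on N f -> (forall k, (k < N)%nat -> w k = w' k) -> f w = f w'.
Proof.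
  intros [L [HL Hf]] Hw. rewrite !Hf. clear Hf.
  induction HL as [|p L Hp HL IH]; [reflexivity|].
  rewrite !polyEval_cons, IH. unfold mono.
  rewrite (monoAux_local 0 w w' (snd p)); [reflexivity|].
  intros i Hi. apply Hw. simpl in Hp. lia.
Qed.

Lemma poly_on_comp M N f (s : nat -> (nat -> R) -> R) :
  poly_on M f -> (forall k, (k < M)%nat -> poly_on N (s k)) ->
  poly_on N (fun w => f (fun k => s k w)).
Proof.
  intros [L [HL Hf]] Hs. eapply poly_on_ext; [intros w; symmetry; apply Hf|].
  assert (Hmono : forall e k, (k + length e <= M)%nat ->
                    poly_on N (fun w => monoAux k (fun i => s i w) e)).
  { induction e as [|c e IH]; intros k He; simpl in *; [apply poly_on_const|].
    apply poly_on_mul; [apply poly_on_pow, Hs; lia | apply IH; lia]. }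
  clear Hf. induction HL as [|p L Hp HL IH]; [exact (poly_on_const N 0)|].
  eapply poly_on_ext; [intros w; symmetry; apply polyEval_cons|].
  apply poly_on_add; [|exact IH].
  apply poly_on_mul; [apply poly_on_const | apply Hmono; lia].
Qed.

Lemma poly_on_upd N j f g :
  (j < N)%nat -> poly_on N f -> poly_on N g -> poly_on N (fun w => f (upd w j (g w))).
Proof.
  intros Hj Hf Hg. apply (poly_on_comp N N f (fun k w => upd w j (g w) k)); [exact Hf|].
  intros k Hk. unfold upd. destruct (Nat.eqb_spec k j); [exact Hg | now apply poly_on_var].
Qed.

Lemma mono_upd_unitexp w j t e :
  mono (upd w j t) (addexp (unitexp j) e) = t * mono (upd w j t) e.
Proof. unfold mono. now rewrite monoAux_addexp, monoAux_unitexp, upd_same. Qed.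

Definition antideriv (j : nat) (L : list (R * list nat)) : list (R * list nat) :=
  map (fun p => (fst p / INR (S (nth j (snd p) 0%nat)), addexp (unitexp j) (snd p))) L.

Lemma is_derive_antideriv j L w t :
  is_derive (fun s => polyEval (antideriv j L) (upd w j s)) t (polyEval L (upd w j t)).
Proof.
  induction L as [|[c e] L IH].
  { change (is_derive (fun _ : R => 0) t 0). apply (is_derive_const (K := R_AbsRing) 0). }
  unfold antideriv; cbn [map]. fold (antideriv j L).
  set (k := nth j e 0%nat). set (K := mono (upd w j 1) e).
  apply (is_derive_ext (fun s => c / INR (S k) * s ^ S k * K + polyEval (antideriv j L) (upd w j s))).
  { intros s. rewrite polyEval_cons; cbn [fst snd]. rewrite mono_upd_unitexp, mono_upd. fold k K.
    change (s ^ S k) with (s * s ^ k).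
    lazymatch goal with |- ?x = ?y => change (@eq R x y) end. ring. }
  rewrite polyEval_cons; cbn [fst snd]. rewrite mono_upd. fold k K.
  apply (is_derive_plus (fun s => c / INR (S k) * s ^ S k * K)); [|exact IH].
  auto_derive; [exact I|].
  change (match k with 0%nat => 1 | S _ => INR k + 1 end) with (INR (S k)).
  field. apply not_0_INR. lia.
Qed.

Lemma poly_on_antiderivative N j f :
  (j < N)%nat -> poly_on N f ->
  exists F, poly_on N F /\ forall w t, is_derive (fun s => F (upd w j s)) t (f (upd w j t)).
Proof.
  intros Hj [L [HL Hf]]. exists (polyEval (antideriv j L)). split.
  - exists (antideriv j L). split; [|reflexivity].
    apply Forall_map. eapply Forall_impl; [|exact HL]. intros p Hp. simpl in *.
    rewrite length_addexp, length_unitexp. lia.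
  - intros w t. rewrite Hf. apply is_derive_antideriv.
Qed.

Lemma continuous_poly_on N f w j t :
  poly_on N f -> continuous (fun s => f (upd w j s)) t.
Proof.
  intros [L [_ Hf]]. apply (continuous_ext (fun s => polyEval L (upd w j s))).
  { intros s. now rewrite Hf. }
  apply (ex_derive_continuous (K := R_AbsRing) (V := R_NormedModule)). clear Hf.
  induction L as [|[c e] L IH]; [change (ex_derive (fun _ : R => 0) t); apply ex_derive_const|].
  apply (ex_derive_ext (fun s => c * (s ^ nth j e 0%nat * mono (upd w j 1) e)
                                 + polyEval L (upd w j s))).
  { intros s. rewrite polyEval_cons; cbn [fst snd]. now rewrite (mono_upd w j s e). }
  apply (ex_derive_plus (fun s => c * (s ^ nth j e 0%nat * mono (upd w j 1) e))); [|exact IH].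
  auto_derive. exact I.
Qed.

(** * Iterated integrals of box indicators times polynomials *)

Definition Rleb (x y : R) : bool := if Rle_dec x y then true else false.

Lemma Rleb_spec x y : Rleb x y = true <-> x <= y.
Proof. unfold Rleb. destruct (Rle_dec x y); split; easy. Qed.

Definition seg (b c t : R) : R := if Rleb c t && Rleb t b then 1 else 0.

Lemma is_RInt_seg (a b c : R) (f F : R -> R) :
  a <= c <= b -> (forall t, is_derive F t (f t)) -> (forall t, continuous f t) ->
  is_RInt (fun t => seg b c t * f t) a b (F b - F c).
Proof.
  intros Hc HF Hf.
  assert (Hl : is_RInt (fun t => seg b c t * f t) a c 0).
  { apply (is_RInt_ext (fun _ => 0)).
    - intros t Ht. rewrite Rmin_left, Rmax_right in Ht by lra. unfold seg, Rleb.
      destruct (Rle_dec c t); [lra|]. simpl; ring.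
    - pose proof (is_RInt_const a c 0) as H0. rewrite (scal_zero_r (V := R_NormedModule)) in H0. exact H0. }
  assert (Hr : is_RInt (fun t => seg b c t * f t) c b (F b - F c)).
  { apply (is_RInt_ext f).
    - intros t Ht. rewrite Rmin_left, Rmax_right in Ht by lra. unfold seg.
      replace (Rleb c t) with true by (symmetry; apply Rleb_spec; lra).
      replace (Rleb t b) with true by (symmetry; apply Rleb_spec; lra). simpl; ring.
    - apply (is_RInt_derive F f); intros; [apply HF | apply Hf]. }
  replace (F b - F c) with (plus 0 (F b - F c)) by (unfold plus; simpl; ring).
  exact (is_RInt_Chasles _ _ _ _ _ _ Hl Hr).
Qed.

Lemma Rint_eq f a b v : is_RInt f a b v -> Rint f a b = v.
Proof.
  intros Hv. unfold Rint. destruct excluded_middle_informative as [Hex|Hnex].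
  - destruct (constructive_indefinite_description _ Hex) as [pr Hpr]. simpl.
    rewrite <- RInt_Reals. now apply is_RInt_unique.
  - exfalso. apply Hnex. exists (ex_RInt_Reals_0 _ _ _ (ex_intro _ v Hv)). exact I.
Qed.

(* [Rint] is 0 on non-integrable functions, so [intBox] is not additive.  [is_intBox]
   asserts in addition that every inner integral exists, which makes it additive. *)
Fixpoint is_intBox (m : nat) (a b : R) (F : (nat -> R) -> R) (v : R) : Prop :=
  match m with
  | O => F (fun _ => 0) = v
  | S m' => exists g : R -> R,
      (forall t, is_intBox m' a b (fun z => F (upd z m' t)) (g t)) /\ is_RInt g a b v
  end.

Lemma intBox_eq m a b F v : is_intBox m a b F v -> intBox m a b F = v.
Proof.
  revert F v; induction m as [|m IH]; intros F v HF; [exact HF|].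
  destruct HF as [g [Hg Hint]]. simpl.
  replace (fun t => intBox m a b (fun z => F (fun i => if (i =? m)%nat then t else z i))) with g.
  - now apply Rint_eq.
  - apply functional_extensionality; intros t. symmetry. apply IH, Hg.
Qed.

Lemma is_intBox_plus m a b F G u v :
  is_intBox m a b F u -> is_intBox m a b G v -> is_intBox m a b (fun z => F z + G z) (u + v).
Proof.
  revert F G u v; induction m as [|m IH]; intros F G u v HF HG; simpl in *.
  - now rewrite HF, HG.
  - destruct HF as [f [Hf Hfi]], HG as [g [Hg Hgi]].
    exists (fun t => f t + g t). split.
    + intros t. apply IH; [apply Hf | apply Hg].
    + exact (is_RInt_plus _ _ _ _ _ _ Hfi Hgi).
Qed.

Lemma is_intBox_scal m a b c F v :
  is_intBox m a b F v -> is_intBox m a b (fun z => c * F z) (c * v).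
Proof.
  revert F v; induction m as [|m IH]; intros F v HF; simpl in *.
  - now rewrite HF.
  - destruct HF as [f [Hf Hfi]]. exists (fun t => c * f t). split.
    + intros t. apply IH, Hf.
    + exact (is_RInt_scal _ _ _ _ _ Hfi).
Qed.

Lemma is_intBox_zero m a b : is_intBox m a b (fun _ => 0) 0.
Proof.
  induction m as [|m IH]; simpl; [reflexivity|].
  exists (fun _ => 0). split; [intros; exact IH|].
  pose proof (is_RInt_const a b 0) as H0. rewrite (scal_zero_r (V := R_NormedModule)) in H0. exact H0.
Qed.

Definition inbox (b : R) (m : nat) (c z : nat -> R) : bool :=
  forallb (fun i => Rleb (c i) (z i) && Rleb (z i) b) (seq 0 m).

Definition box (b : R) (m : nat) (c z : nat -> R) : R := if inbox b m c z then 1 else 0.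

Lemma forallb_seq_iff (f : nat -> bool) m :
  forallb f (seq 0 m) = true <-> forall i, (i < m)%nat -> f i = true.
Proof.
  rewrite forallb_forall. split; intros H i Hi; apply H; [apply in_seq; lia|].
  apply in_seq in Hi; lia.
Qed.

Lemma inbox_spec b m c z :
  inbox b m c z = true <-> forall i, (i < m)%nat -> c i <= z i <= b.
Proof.
  unfold inbox. rewrite forallb_seq_iff.
  split; intros H i Hi; specialize (H i Hi).
  - apply andb_true_iff in H. rewrite !Rleb_spec in H. exact H.
  - apply andb_true_iff. now rewrite !Rleb_spec.
Qed.

Lemma inbox_ext b m c c' z z' :
  (forall i, (i < m)%nat -> c i = c' i) -> (forall i, (i < m)%nat -> z i = z' i) ->
  inbox b m c z = inbox b m c' z'.
Proof.
  intros Hc Hz. apply eq_true_iff_eq. rewrite !inbox_spec.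
  split; intros H i Hi; specialize (H i Hi); rewrite ?Hc, ?Hz in *; auto.
Qed.

Lemma box_ext b m c c' z z' :
  (forall i, (i < m)%nat -> c i = c' i) -> (forall i, (i < m)%nat -> z i = z' i) ->
  box b m c z = box b m c' z'.
Proof. intros Hc Hz. unfold box. now rewrite (inbox_ext b m c c' z z'). Qed.

Lemma box_mul b m c c' z :
  box b m c z * box b m c' z = box b m (fun i => Rmax (c i) (c' i)) z.
Proof.
  unfold box.
  replace (inbox b m (fun i => Rmax (c i) (c' i)) z) with (inbox b m c z && inbox b m c' z).
  { destruct (inbox b m c z), (inbox b m c' z); simpl; ring. }
  apply eq_true_iff_eq. rewrite andb_true_iff, !inbox_spec. split.
  - intros [H H'] i Hi. specialize (H i Hi). specialize (H' i Hi).
    split; [apply Rmax_lub|]; lra.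
  - intros H. split; intros i Hi; specialize (H i Hi);
      pose proof (Rmax_l (c i) (c' i)); pose proof (Rmax_r (c i) (c' i)); lra.
Qed.

Lemma box_mul_le b m c c' z :
  (forall i, (i < m)%nat -> c i <= c' i) -> box b m c z * box b m c' z = box b m c' z.
Proof.
  intros Hc. rewrite box_mul. apply box_ext; [|easy].
  intros i Hi. apply Rmax_right, Hc, Hi.
Qed.

Lemma box_upd_last b m c z t :
  box b (S m) c (upd z m t) = box b m c z * seg b (c m) t.
Proof.
  unfold box, seg.
  replace (inbox b (S m) c (upd z m t))
    with (inbox b m c z && (Rleb (c m) t && Rleb t b)).
  { destruct (inbox b m c z), (Rleb (c m) t && Rleb t b); simpl; ring. }
  unfold inbox at 2. rewrite seq_S, forallb_app. simpl. rewrite upd_same, andb_true_r.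
  f_equal. apply inbox_ext; [easy|]. intros i Hi. symmetry. apply upd_other. lia.
Qed.

Definition merge (m : nat) (z w : nat -> R) : nat -> R :=
  fun i => if (i <? m)%nat then z i else w i.

Lemma merge_upd m z w t : merge (S m) (upd z m t) w = merge m z (upd w m t).
Proof.
  apply functional_extensionality; intros i. unfold merge, upd.
  destruct (Nat.ltb_spec i (S m)), (Nat.ltb_spec i m), (Nat.eqb_spec i m); lia || reflexivity.
Qed.

(* In [merge m z w] the first [m] variables are the integration variables [z]; the
   remaining ones are parameters taken from [w]. *)
Lemma is_intBox_box_poly a b N m :
  (m <= N)%nat ->
  forall (C : nat -> (nat -> R) -> R) (Q : (nat -> R) -> R),
  (forall i, (i < m)%nat -> poly_on N (C i)) ->
  (forall i j w t, (i < m)%nat -> (j < m)%nat -> C i (upd w j t) = C i w) ->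
  poly_on N Q ->
  exists Rm, poly_on N Rm /\
    forall w, (forall i, (i < m)%nat -> a <= C i w <= b) ->
      is_intBox m a b (fun z => box b m (fun i => C i w) z * Q (merge m z w)) (Rm w).
Proof.
  induction m as [|m IH]; intros Hm C Q HC HCind HQ.
  { exists Q. split; [exact HQ|]. intros w _. apply Rmult_1_l. }
  destruct (IH ltac:(lia) C Q) as [R0 [HR0 HI0]];
    [intros; apply HC; lia | intros; apply HCind; lia | exact HQ |].
  destruct (poly_on_antiderivative N m R0) as [F [HF HFd]]; [lia | exact HR0|].
  exists (fun w => F (upd w m b) - F (upd w m (C m w))). split.
  { apply poly_on_sub; apply poly_on_upd; try lia; auto using poly_on_const. }
  intros w Hw. exists (fun t => seg b (C m w) t * R0 (upd w m t)). split.
  - intros t.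
    replace (fun z => box b (S m) (fun i => C i w) (upd z m t) * Q (merge (S m) (upd z m t) w))
      with (fun z => seg b (C m w) t
                     * (box b m (fun i => C i (upd w m t)) z * Q (merge m z (upd w m t)))).
    + apply is_intBox_scal, HI0. intros i Hi. rewrite HCind by lia. apply Hw; lia.
    + apply functional_extensionality; intros z.
      rewrite box_upd_last, merge_upd, (box_ext b m _ (fun i => C i w) z z); [ring| |easy].
      intros i Hi. apply HCind; lia.
  - apply (is_RInt_seg a b (C m w) (fun t => R0 (upd w m t)) (fun s => F (upd w m s)));
      [apply Hw; lia | intros t; apply HFd |].
    intros t. exact (continuous_poly_on N R0 w m t HR0).
Qed.

(** * The kernel *)

Lemma cat2_l n u v i : (i < n)%nat -> cat2 n u v i = u i.
Proof. intros Hi. unfold cat2. now destruct (Nat.ltb_spec i n); [|lia]. Qed.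

Lemma cat2_r n u v i : cat2 n u v (n + i) = v i.
Proof. unfold cat2. destruct (Nat.ltb_spec (n + i) n); [lia|]. f_equal; lia. Qed.

Lemma cat2_ge n u v i : (n <= i)%nat -> cat2 n u v i = v (i - n)%nat.
Proof. intros Hi. unfold cat2. now destruct (Nat.ltb_spec i n); [lia|]. Qed.

Lemma mons_length m d e : In e (mons m d) -> length e = m.
Proof.
  revert d e; induction m as [|m IH]; intros d e He; cbn [mons] in He.
  - now destruct He as [<-|[]].
  - apply in_flat_map in He. destruct He as [k [_ Hk]].
    apply in_map_iff in Hk. destruct Hk as [e' [<- He']]. simpl. f_equal. eapply IH, He'.
Qed.

Lemma nth_map_mulr l c i : nth i (map (fun v => v * c) l) 0 = nth i l 0 * c.
Proof. revert i; induction l as [|v l IH]; intros [|i]; simpl; auto; ring. Qed.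

Section Kernel.

Variables (n : nat) (a b : R) (alpha : nat -> bool).
Hypothesis Hab : a <= b.

Definition admissible (x y : nat -> R) : Prop :=
  inX n a b x /\ inX n a b y /\
  forall i, (i < n)%nat -> 0 <= (-1) ^ (if alpha i then 1 else 0) * (x i - y i).

Definition poly_box_integral (F : (nat -> R) -> (nat -> R) -> (nat -> R) -> R) : Prop :=
  exists Rk, poly_on (2 * n) Rk /\
    forall x y, admissible x y -> is_intBox n a b (fun z => F z x y) (Rk (cat2 n x y)).

Lemma poly_box_integral_ext F G :
  (forall x y, admissible x y -> forall z, F z x y = G z x y) ->
  poly_box_integral F -> poly_box_integral G.
Proof.
  intros HFG [Rk [HR HF]]. exists Rk. split; [exact HR|]. intros x y Hxy.
  replace (fun z => G z x y) with (fun z => F z x y); [now apply HF|].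
  apply functional_extensionality; intros z. now apply HFG.
Qed.

Lemma poly_box_integral_plus F G :
  poly_box_integral F -> poly_box_integral G ->
  poly_box_integral (fun z x y => F z x y + G z x y).
Proof.
  intros [RF [HRF HF]] [RG [HRG HG]]. exists (fun u => RF u + RG u).
  split; [now apply poly_on_add|]. intros x y Hxy. apply is_intBox_plus; auto.
Qed.

Lemma poly_box_integral_scal c F :
  poly_box_integral F -> poly_box_integral (fun z x y => c * F z x y).
Proof.
  intros [RF [HRF HF]]. exists (fun u => c * RF u).
  split; [apply poly_on_mul; [apply poly_on_const | exact HRF]|].
  intros x y Hxy. apply is_intBox_scal; auto.
Qed.

Lemma poly_box_integral_fsum m (F : nat -> (nat -> R) -> (nat -> R) -> (nat -> R) -> R) :
  (forall i, (i < m)%nat -> poly_box_integral (F i)) ->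
  poly_box_integral (fun z x y => fsum m (fun i => F i z x y)).
Proof.
  induction m as [|m IH]; intros HF; simpl.
  - exists (fun _ => 0). split; [apply poly_on_const|]. intros; apply is_intBox_zero.
  - apply poly_box_integral_plus; [apply IH; auto | apply HF; lia].
Qed.

Lemma poly_box_integral_box (C : nat -> (nat -> R) -> R) (Q : (nat -> R) -> R) :
  (forall i, (i < n)%nat -> poly_on (2 * n) (C i)) ->
  (forall x y, admissible x y -> forall i, (i < n)%nat -> a <= C i (cat2 n x y) <= b) ->
  poly_on (3 * n) Q ->
  poly_box_integral (fun z x y => box b n (fun i => C i (cat2 n x y)) z * Q (cat2 n z (cat2 n x y))).
Proof.
  intros HC HCb HQ.
  destruct (is_intBox_box_poly a b (3 * n) n ltac:(lia) (fun i w => C i (fun k => w (n + k)%nat)) Q)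
    as [Rm [HRm HI]]; [| |exact HQ|].
  - intros i Hi. apply (poly_on_comp (2 * n)); [now apply HC|].
    intros k Hk. apply poly_on_var. lia.
  - intros i j w t Hi Hj. f_equal. apply functional_extensionality; intros k.
    apply upd_other. lia.
  - (* The parameters [u = (x, y)] become the variables [n .. 3n-1]. *)
    exists (fun u => Rm (fun k => u (k - n)%nat)). split.
    + apply (poly_on_comp (3 * n)); [exact HRm|]. intros k Hk. apply poly_on_var. lia.
    + intros x y Hxy.
      assert (Hshift : (fun k => cat2 n x y (n + k - n)%nat) = cat2 n x y).
      { apply functional_extensionality; intros k. f_equal. lia. }
      pose proof (HI (fun k => cat2 n x y (k - n)%nat)) as Hint. cbv beta in Hint.
      rewrite Hshift in Hint. apply Hint. now apply HCb.
Qed.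

Lemma inXb_spec z : inXb n a b z = true <-> inX n a b z.
Proof.
  unfold inXb, inX. rewrite forallb_seq_iff.
  split; intros H i Hi; specialize (H i Hi);
    destruct (Rle_dec a (z i)), (Rle_dec (z i) b); easy || lra.
Qed.

Lemma geb_spec z x : geb n z x = true <-> forall i, (i < n)%nat -> x i <= z i.
Proof.
  unfold geb. rewrite forallb_seq_iff.
  split; intros H i Hi; specialize (H i Hi); destruct (Rle_dec (x i) (z i)); easy.
Qed.

Lemma inbox_geb x z : inX n a b x -> inbox b n x z = inXb n a b z && geb n z x.
Proof.
  intros Hx. apply eq_true_iff_eq. rewrite andb_true_iff, inbox_spec, inXb_spec, geb_spec.
  split.
  - intros H. split; intros i Hi; specialize (H i Hi); specialize (Hx i Hi); lra.
  - intros [Hz Hzx] i Hi. specialize (Hz i Hi). specialize (Hzx i Hi). lra.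
Qed.

Lemma inbox_const z : inbox b n (fun _ => a) z = inXb n a b z.
Proof.
  apply eq_true_iff_eq. rewrite inbox_spec, inXb_spec. reflexivity.
Qed.

(* [I_S1 = box x] and [I_S2 = box a - box x], written uniformly in the side [s]. *)
Lemma I_S_split (s : bool) z x :
  inX n a b x ->
  (if s then I_S1 n a b z x else I_S2 n a b z x)
  = (if s then 0 else 1) * box b n (fun _ => a) z + (if s then 1 else -1) * box b n x z.
Proof.
  intros Hx. unfold I_S1, I_S2, box.
  rewrite inbox_const, (inbox_geb x z Hx), (proj2 (inXb_spec x) Hx).
  destruct s, (inXb n a b z), (geb n z x); simpl; ring.
Qed.

Definition corner (sel : nat -> option nat) (u : nat -> R) (i : nat) : R :=
  match sel i with Some k => u k | None => a end.

Lemma poly_box_integral_corner sel Q :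
  (forall i k, (i < n)%nat -> sel i = Some k -> (k < 2 * n)%nat) -> poly_on (3 * n) Q ->
  poly_box_integral (fun z x y => box b n (corner sel (cat2 n x y)) z * Q (cat2 n z (cat2 n x y))).
Proof.
  intros Hsel HQ. apply (poly_box_integral_box (fun i u => corner sel u i)); [| |exact HQ].
  - intros i Hi. unfold corner. destruct (sel i) as [k|] eqn:Hk.
    + apply poly_on_var. now apply (Hsel i).
    + apply poly_on_const.
  - intros x y [Hx [Hy _]] i Hi. unfold corner. destruct (sel i) as [k|] eqn:Hk; [|lra].
    specialize (Hsel i k Hi Hk). destruct (Nat.ltb_spec k n).
    + rewrite cat2_l by lia. now apply Hx.
    + replace k with (n + (k - n))%nat by lia. rewrite cat2_r. apply Hy. lia.
Qed.

Lemma I_S_product (s t : bool) z x y :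
  admissible x y ->
  (if s then I_S1 n a b z x else I_S2 n a b z x) * (if t then I_S1 n a b z y else I_S2 n a b z y)
  = (if s then 0 else 1) * (if t then 0 else 1) * box b n (corner (fun _ => None) (cat2 n x y)) z
  + (if s then 0 else 1) * (if t then 1 else -1) * box b n (corner (fun i => Some (n + i)%nat) (cat2 n x y)) z
  + (if s then 1 else -1) * (if t then 0 else 1) * box b n (corner (fun i => Some i) (cat2 n x y)) z
  + (if s then 1 else -1) * (if t then 1 else -1)
    * box b n (corner (fun i => Some (if alpha i then n + i else i)%nat) (cat2 n x y)) z.
Proof.
  intros [Hx [Hy Hxy]]. rewrite (I_S_split s z x Hx), (I_S_split t z y Hy).
  rewrite (box_ext b n (corner (fun i => Some i) (cat2 n x y)) x z z),
    (box_ext b n (corner (fun i => Some (n + i)%nat) (cat2 n x y)) y z z); try easy;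
    [| intros i Hi; apply cat2_r | intros i Hi; now apply cat2_l].
  change (box b n (corner (fun _ => None) (cat2 n x y)) z) with (box b n (fun _ => a) z).
  set (A := box b n (fun _ => a) z). set (X := box b n x z). set (Y := box b n y z).
  set (M := box b n _ z).
  assert (HAA : A * A = A) by (apply box_mul_le; intros; lra).
  assert (HAY : A * Y = Y) by (apply box_mul_le; intros i Hi; apply Hy, Hi).
  assert (HXA : X * A = X) by (rewrite Rmult_comm; apply box_mul_le; intros i Hi; apply Hx, Hi).
  assert (HXY : X * Y = M).
  { unfold X, Y, M. rewrite box_mul. apply box_ext; [|easy]. intros i Hi.
    specialize (Hxy i Hi). unfold corner.
    destruct (alpha i); simpl in Hxy; [rewrite cat2_r | rewrite cat2_l by lia].
    - apply Rmax_right. lra.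
    - apply Rmax_left. lra. }
  transitivity ((if s then 0 else 1) * (if t then 0 else 1) * (A * A)
              + (if s then 0 else 1) * (if t then 1 else -1) * (A * Y)
              + (if s then 1 else -1) * (if t then 0 else 1) * (X * A)
              + (if s then 1 else -1) * (if t then 1 else -1) * (X * Y)); [ring|].
  now rewrite HAA, HAY, HXA, HXY.
Qed.

Lemma poly_box_integral_indicators (s t : bool) Q :
  poly_on (3 * n) Q ->
  poly_box_integral (fun z x y => Q (cat2 n z (cat2 n x y))
    * ((if s then I_S1 n a b z x else I_S2 n a b z x)
       * (if t then I_S1 n a b z y else I_S2 n a b z y))).
Proof.
  intros HQ.
  set (term := fun sel z x y => box b n (corner sel (cat2 n x y)) z * Q (cat2 n z (cat2 n x y))).
  apply (poly_box_integral_ext (fun z x y =>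
      (if s then 0 else 1) * (if t then 0 else 1) * term (fun _ => None) z x y
    + (if s then 0 else 1) * (if t then 1 else -1) * term (fun i => Some (n + i)%nat) z x y
    + (if s then 1 else -1) * (if t then 0 else 1) * term (fun i => Some i) z x y
    + (if s then 1 else -1) * (if t then 1 else -1)
      * term (fun i => Some (if alpha i then n + i else i)%nat) z x y)).
  { intros x y Hxy z. rewrite (I_S_product s t z x y Hxy). unfold term. ring. }
  repeat apply poly_box_integral_plus; apply poly_box_integral_scal;
    apply poly_box_integral_corner; try exact HQ; intros i k Hi Hk; try discriminate;
    injection Hk as <-; try destruct (alpha i); lia.
Qed.

(* Entry [i] of [(Z_d(w), Z_d(w))]; [N(z,x)] is this vector times [(I_S1, I_S2)]. *)
Definition zz_entry (d i : nat) (w : nat -> R) : R :=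
  nth i (map (mono w) (mons (2 * n) d ++ mons (2 * n) d)) 0.

Lemma poly_on_zz_entry d i : poly_on (2 * n) (zz_entry d i).
Proof.
  unfold zz_entry. set (l := mons (2 * n) d ++ mons (2 * n) d).
  destruct (Nat.ltb_spec i (length l)) as [Hi|Hi].
  - apply (poly_on_ext _ (fun w => mono w (nth i l []))).
    { intros w. rewrite (@nth_indep R (map (mono w) l) i 0 (mono w [])) by now rewrite length_map.
      now rewrite map_nth. }
    apply poly_on_mono. apply nth_In with (d := []) in Hi.
    apply in_app_or in Hi. destruct Hi as [He|He]; rewrite (mons_length _ _ _ He); lia.
  - apply (poly_on_ext _ (fun _ => 0)); [|apply poly_on_const].
    intros w. rewrite nth_overflow; [reflexivity|]. now rewrite length_map.
Qed.

Lemma nth_Nvec d z x i :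
  nth i (Nvec n d a b z x) 0
  = zz_entry d i (cat2 n z x)
    * (if (i <? qdim n d)%nat then I_S1 n a b z x else I_S2 n a b z x).
Proof.
  unfold Nvec, zz_entry, Zd, qdim. rewrite map_app.
  set (l := map (mono (cat2 n z x)) (mons (2 * n) d)).
  assert (Hl : length l = length (mons (2 * n) d)) by apply length_map.
  destruct (Nat.ltb_spec i (length (mons (2 * n) d))).
  - rewrite !app_nth1 by (rewrite ?length_map; lia). apply nth_map_mulr.
  - rewrite !app_nth2 by (rewrite ?length_map; lia). rewrite length_map, Hl.
    apply nth_map_mulr.
Qed.

Lemma poly_box_integral_quadN_entry d (P : nat -> nat -> R) i j :
  poly_box_integral (fun z x y => nth i (Nvec n d a b z x) 0 * P i j * nth j (Nvec n d a b z y) 0).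
Proof.
  (* With [v = (z, x, y)], the pair [(z, y)] sits at the indices [k < n] and [n + k]. *)
  set (Q := fun v => zz_entry d i v * P i j
                     * zz_entry d j (fun k => v (if (k <? n)%nat then k else n + k)%nat)).
  apply (poly_box_integral_ext (fun z x y => Q (cat2 n z (cat2 n x y))
    * ((if (i <? qdim n d)%nat then I_S1 n a b z x else I_S2 n a b z x)
       * (if (j <? qdim n d)%nat then I_S1 n a b z y else I_S2 n a b z y)))).
  - intros x y _ z. rewrite !nth_Nvec. unfold Q.
    assert (Hzx : forall k, (k < 2 * n)%nat -> cat2 n z (cat2 n x y) k = cat2 n z x k).
    { intros k Hk. destruct (Nat.ltb_spec k n); [now rewrite !cat2_l|].
      rewrite (cat2_ge n z), (cat2_ge n z x), cat2_l by lia. reflexivity. }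
    assert (Hzy : forall k, (k < 2 * n)%nat ->
               cat2 n z (cat2 n x y) (if (k <? n)%nat then k else n + k)%nat = cat2 n z y k).
    { intros k Hk. destruct (Nat.ltb_spec k n); [now rewrite !cat2_l|].
      rewrite !cat2_ge by lia. f_equal; lia. }
    rewrite (poly_on_local _ _ _ _ (poly_on_zz_entry d i) Hzx),
      (poly_on_local _ _ _ _ (poly_on_zz_entry d j) Hzy).
    ring.
  - apply poly_box_integral_indicators. unfold Q.
    repeat apply poly_on_mul.
    + apply (poly_on_weaken (2 * n)); [lia | apply poly_on_zz_entry].
    + apply poly_on_const.
    + apply (poly_on_comp (2 * n)); [apply poly_on_zz_entry|]. intros k Hk.
      destruct (Nat.ltb_spec k n); apply poly_on_var; lia.
Qed.

Lemma poly_box_integral_quadN d (P : nat -> nat -> R) :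
  poly_box_integral (fun z x y => quadN n d a b P z x y).
Proof.
  unfold quadN. cbv zeta.
  apply (poly_box_integral_fsum _ (fun i z x y => fsum (2 * qdim n d) (fun j =>
           nth i (Nvec n d a b z x) 0 * P i j * nth j (Nvec n d a b z y) 0))).
  intros i _. apply (poly_box_integral_fsum _ (fun j z x y =>
           nth i (Nvec n d a b z x) 0 * P i j * nth j (Nvec n d a b z y) 0)).
  intros j _. apply poly_box_integral_quadN_entry.
Qed.

End Kernel.

Theorem mainTheorem5 (n d : nat) (a b : R) (P : nat -> nat -> R) :
  a < b ->
  (forall i j, (i < 2 * qdim n d)%nat -> (j < 2 * qdim n d)%nat -> P i j = P j i) ->
  forall alpha : nat -> bool,
  exists L : list (R * list nat),
    Forall (fun t => (length (snd t) <= 2 * n)%nat) L /\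
    forall x y : nat -> R,
      inX n a b x -> inX n a b y ->
      (forall i, (i < n)%nat -> 0 <= (-1) ^ (if alpha i then 1 else 0) * (x i - y i)) ->
      kern n d a b P x y = polyEval L (cat2 n x y).
Proof.
  intros Hab _ alpha.
  destruct (poly_box_integral_quadN n a b alpha ltac:(lra) d P) as [Rk [[L [HL HRk]] Hint]].
  exists L. split; [exact HL|]. intros x y Hx Hy Hxy.
  unfold kern. rewrite (intBox_eq _ _ _ _ _ (Hint x y (conj Hx (conj Hy Hxy)))).
  apply HRk.
Qed.
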